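(* Let $C\subseteq\mathbb{C}$ be a subring, $D>0$, and let $F(A;X)=\big(\sum_i|f_i(A;X)|^2\big)^{\varepsilon/2}$ be an absolute polynomial power in $A=(A_1,\dots,A_m)$, $X=(X_1,\dots,X_n)$, with finitely many $f_i\in C[A,X]$ of degree at most $D$ and $\varepsilon\ge0$ rational. Assume $F$ is symmetric in $X$: $F(A;X_{\pi(1)},\dots,X_{\pi(n)})=F(A;X)$ for all permutations $\pi\in S_n$ (as functions on $\mathbb{C}^{m+n}$). Then there is an absolute polynomial power $\tilde F(A;\Sigma)$ in $A$ and $\Sigma=(\Sigma_1,\dots,\Sigma_n)$ with coefficients in $C$ such that $F(A;X)\sim\tilde F(A;\sigma_1(X),\dots,\sigma_n(X))$ on $\mathbb{C}^{m+n}$, with implied constants depending only on $\varepsilon$, $D$, $n$ and the number of terms of $F$.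
   Context: An absolute polynomial power with coefficients in $C$ is an expression $(\sum_i|P_i|^2)^{\varepsilon/2}$ with finitely many polynomials $P_i$ with coefficients in $C$ and $\varepsilon\ge0$ rational. The elementary symmetric polynomials $\sigma_j\in\mathbb{Z}[X_1,\dots,X_n]$ are defined by $\prod_{i=1}^n(T+X_i)=T^n+\sum_{j=1}^n\sigma_jT^{n-j}$. $\sim$ means each side is bounded by a positive constant times the other. *)

From HB Require Import structures.
From mathcomp Require Import all_boot all_order all_algebra all_fingroup.
From mathcomp Require Import mpoly.
From mathcomp Require Import all_classical all_reals all_analysis.
From mathcomp Require Import complex.
Set Implicit Arguments. Unset Strict Implicit. Unset Printing Implicit Defensive.
Import Order.TTheory GRing.Theory Num.Theory.
Local Open Scope ring_scope.

Definition joinv (T : Type) (m n : nat) (a : 'I_m -> T) (x : 'I_n -> T)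
  : 'I_(m + n) -> T :=
  fun i => match fintype.split i with inl j => a j | inr j => x j end.

(* absolute polynomial power (sum_{p in ps} |p(z)|^2)^(e/2), evaluated at z.
   `|w| : R[i] is the (real, nonnegative) modulus, complex.Re takes it into R. *)
Definition abspp (R : realType) (k : nat) (ps : seq {mpoly R[i][k]})
  (e : rat) (z : 'I_k -> R[i]) : R :=
  powR (\sum_(p <- ps) (complex.Re `|p.@[z]|) ^+ 2) (ratr e / 2).

Definition esymv (R : realType) (n : nat) (x : 'I_n -> R[i]) : 'I_n -> R[i] :=
  fun j => (mesym n R[i] (nat_of_ord j).+1).@[x].

From HB Require Import structures.
From mathcomp Require Import all_boot all_order all_algebra all_fingroup.
From mathcomp Require Import mpoly.
From mathcomp Require Import all_classical all_reals all_analysis.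
From mathcomp Require Import complex.
From mathcomp Require Import lra.
Import Order.TTheory GRing.Theory Num.Theory.
Local Open Scope ring_scope.
Set Implicit Arguments. Unset Strict Implicit. Unset Printing Implicit Defensive.

(* For each f, the polynomial P_f(T) = prod_(pi in S_n) (T - f(A; X o pi)) has
   coefficients symmetric in X, hence equal to polynomials in A and sigma(X) with
   coefficients in C.  With K = n! roots, the j-th coefficient is homogeneous of
   degree K - j in the roots, so its power of exponent L / (K - j), L = K!, scales
   like the L-th power of the roots.  Vieta bounds these powers by the roots, a
   Cauchy-type root bound bounds the roots by them, and the symmetry of F bounds
   every root f(A; X o pi) by the sum of squares defining F itself.  Taking
   F~ := (sum_(f, j) |P_f[j]^(L / (K - j))|^2)^(eps / (2 L)) then gives F ~ F~. *)

(* Equips a bare [subring_closed] predicate with the [subringClosed] structure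
   expected by the [rpred] lemmas. *)
Definition subring_closed_pred (R : nzRingType) (S : {pred R}) (_ : subring_closed S)
  : {pred R} := S.
HB.instance Definition _ (R : nzRingType) (S : {pred R}) (hS : subring_closed S) :=
  GRing.isSubringClosed.Build R (subring_closed_pred hS) hS.

Lemma rmorph_mmap n (K0 : nzRingType) (K1 K2 : comNzRingType) (f : K0 -> K1)
    (h : 'I_n -> K1) (phi : {rmorphism K1 -> K2}) (p : {mpoly K0[n]}) :
  phi (mmap f h p) = mmap (phi \o f) (phi \o h) p.
Proof.
rewrite /mmap rmorph_sum; apply: eq_bigr => m _.
rewrite rmorphM /mmap1 rmorph_prod /=; congr (_ * _).
by apply: eq_bigr => i _; rewrite rmorphXn.
Qed.

Lemma eq_mmap n (K0 K1 : nzRingType) (f1 f2 : K0 -> K1) (h1 h2 : 'I_n -> K1)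
    (p : {mpoly K0[n]}) :
  f1 =1 f2 -> h1 =1 h2 -> mmap f1 h1 p = mmap f2 h2 p.
Proof.
move=> ef eh; rewrite /mmap; apply: eq_bigr => m _; rewrite ef.
by rewrite (mmap1_eq _ eh).
Qed.

Section MpolyOver.
Variables (n : nat) (K : comNzRingType) (S : subringClosed K).

Lemma comp_mpoly_over k (p : {mpoly K[k]}) (lq : k.-tuple {mpoly K[n]}) :
  p \is a mpolyOver k S -> (forall i, tnth lq i \is a mpolyOver n S) ->
  p \mPo lq \is a mpolyOver n S.
Proof.
move=> /mpolyOverP Sp Slq; rewrite comp_mpolyE rpred_sum // => m _.
by rewrite mpolyOverZ // rpred_prod // => i _; rewrite rpredX.
Qed.

Lemma mesym_over k : mesym n K k \is a mpolyOver n S.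
Proof. by rewrite mesymE rpred_sum // => h _; rewrite mpolyOverX. Qed.

Lemma msym_over (s : 'S_n) (p : {mpoly K[n]}) :
  p \is a mpolyOver n S -> msym s p \is a mpolyOver n S.
Proof. by move=> /mpolyOverP Sp; apply/mpolyOverP => m; rewrite mcoeff_sym. Qed.

Lemma symf1_over (p : {mpoly K[n]}) : p \is a mpolyOver n S ->
  (symf1 p).1 \is a mpolyOver n S /\ (symf1 p).2 \is a mpolyOver n S.
Proof.
move=> Sp; rewrite /symf1; case: (p == 0) => /=; first by rewrite rpred0.
have Slc : p@_(mlead p) \in S by move/mpolyOverP: Sp.
split; first by rewrite mpolyOverZ ?mpolyOverX.
rewrite rpredB // mpolyOverZ // comp_mpoly_over ?mpolyOverX // => i.
by rewrite tnth_map mesym_over.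
Qed.

Lemma symfn_over k (p : {mpoly K[n]}) : p \is a mpolyOver n S ->
  (symfn k p).1 \is a mpolyOver n S /\ (symfn k p).2 \is a mpolyOver n S.
Proof.
elim: k p => [|k IHk] p Sp /=; first exact: symf1_over.
have [] := symf1_over Sp; case: (symf1 p) => t1 p1 /= St1 Sp1.
have [] := IHk p1 Sp1; case: (symfn k p1) => t2 p2 /= St2 Sp2.
by rewrite rpredD.
Qed.

Lemma symf_over (p : {mpoly K[n]}) :
  p \is a mpolyOver n S -> symf p \is a mpolyOver n S.
Proof. by move=> Sp; have [] := symfn_over (tag (symfnS p)) Sp. Qed.

End MpolyOver.

Definition meval2 (K : comNzRingType) M k (z : 'I_M -> K) (y : 'I_k -> K)
    (Q : {mpoly {mpoly K[M]}[k]}) : K :=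
  mmap (meval z) y Q.
HB.instance Definition _ (K : comNzRingType) M k (z : 'I_M -> K) (y : 'I_k -> K) :=
  GRing.RMorphism.copy (meval2 z y) (mmap (meval z) y).

Section TwoLevelEvaluation.
Variables (K : comNzRingType) (M k : nat) (z : 'I_M -> K) (y : 'I_k -> K).

Lemma meval2X i : meval2 z y 'X_i = y i.
Proof. by rewrite /meval2 mmapX mmap1U. Qed.

Lemma meval2C c : meval2 z y c%:MP = c.@[z].
Proof. by rewrite /meval2 mmapC. Qed.

Lemma meval2_msym (s : 'S_k) Q :
  meval2 z y (msym s Q) = meval2 z (fun i => y (s i)) Q.
Proof.
rewrite /msym (rmorph_mmap _ _ (meval2 z y)).
by apply: eq_mmap => [c|i] /=; rewrite ?meval2C ?meval2X.
Qed.

Lemma meval2_mesym l : meval2 z y (mesym k {mpoly K[M]} l) = (mesym k K l).@[y].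
Proof.
rewrite !mesymE !raddf_sum; apply: eq_bigr => h _.
by rewrite /= /meval2 mmapX mevalX.
Qed.

Lemma meval2_comp_mesym (t : {mpoly {mpoly K[M]}[k]}) :
  meval2 z y (t \mPo [tuple mesym k {mpoly K[M]} i.+1 | i < k]) =
  meval2 z (fun i : 'I_k => (mesym k K i.+1).@[y]) t.
Proof.
rewrite /comp_mpoly (rmorph_mmap _ _ (meval2 z y)).
apply: eq_mmap => [c|i] /=; first by rewrite meval2C.
by rewrite tnth_map tnth_ord_tuple meval2_mesym.
Qed.

End TwoLevelEvaluation.

Lemma joinv_rshift (T : Type) m n (a : 'I_m -> T) (x : 'I_n -> T) j :
  joinv a x (rshift m j) = x j.
Proof. by rewrite /joinv (unsplitK (inr j)). Qed.

Section OrbitPolynomial.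
Variables (K : comNzRingType) (n : nat).

Definition orbit_poly (F : {mpoly K[n]}) : {poly {mpoly K[n]}} :=
  \prod_(s : 'S_n) ('X - (msym s F)%:P).

Lemma orbit_poly_coef_sym F j : (orbit_poly F)`_j \is symmetric.
Proof.
apply/issymP => s; rewrite -coef_map.
suff -> : map_poly (msym s) (orbit_poly F) = orbit_poly F by [].
rewrite /orbit_poly rmorph_prod [RHS](reindex_inj (mulIg s)) /=.
by apply: eq_bigr => t _; rewrite rmorphB /= map_polyX map_polyC /= msymMm.
Qed.

Lemma orbit_poly_over (S : subringClosed K) F :
  F \is a mpolyOver n S -> orbit_poly F \is a polyOver (mpolyOver_pred S).
Proof.
move=> SF; rewrite rpred_prod // => s _.
by rewrite rpredB ?polyOverX ?polyOverC ?msym_over.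
Qed.

End OrbitPolynomial.

Lemma map_orbit_poly (K : comNzRingType) M n (z : 'I_M -> K) (y : 'I_n -> K)
    (F : {mpoly {mpoly K[M]}[n]}) :
  map_poly (meval2 z y) (orbit_poly F) =
  \prod_(s : 'S_n) ('X - (meval2 z (fun i => y (s i)) F)%:P).
Proof.
rewrite rmorph_prod; apply: eq_bigr => s _.
by rewrite rmorphB /= map_polyX map_polyC /= meval2_msym.
Qed.

Section OrbitCoefficients.
Variables (K : comNzRingType) (m n : nat).

(* [splitr_mpoly] turns the last [n] variables into the variables of an outer
   polynomial ring; the first [m] become constant coefficients.  The coefficient
   ring is kept as [{mpoly K[m + n]}] so that [joinr_mpoly] can map back. *)
Definition splitr_var (i : 'I_(m + n)) : {mpoly {mpoly K[m + n]}[n]} :=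
  match fintype.split i with inl _ => ('X_i)%:MP | inr j => 'X_j end.

Definition splitr_mpoly (f : {mpoly K[m + n]}) : {mpoly {mpoly K[m + n]}[n]} :=
  mmap (fun c => c%:MP%:MP) splitr_var f.

Definition joinr_mpoly (Q : {mpoly {mpoly K[m + n]}[n]}) : {mpoly K[m + n]} :=
  Q.@[fun j => 'X_(rshift m j)].

Lemma meval2_splitr a w (y : 'I_n -> K) f :
  meval2 (joinv a w) y (splitr_mpoly f) = f.@[joinv a y].
Proof.
rewrite /splitr_mpoly (rmorph_mmap _ _ (meval2 (joinv a w) y)) /meval.
apply: eq_mmap => [c|i] /=; first by rewrite meval2C mevalC.
rewrite /splitr_var; case E: (fintype.split i) => [j|j].
  by rewrite meval2C mevalXU /joinv E.
by rewrite meval2X /joinv E.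
Qed.

Lemma meval_joinr a (y : 'I_n -> K) Q :
  (joinr_mpoly Q).@[joinv a y] = meval2 (joinv a y) y Q.
Proof.
rewrite /joinr_mpoly /meval (rmorph_mmap _ _ (meval (joinv a y))).
by apply: eq_mmap => // j /=; rewrite mevalXU joinv_rshift.
Qed.

Lemma splitr_mpoly_over (S : subringClosed K) f :
  f \is a mpolyOver (m + n) S ->
  splitr_mpoly f \is a mpolyOver n (mpolyOver_pred (n := m + n) S).
Proof.
move=> /mpolyOverP Sf; rewrite /splitr_mpoly /mmap rpred_sum // => mm _.
rewrite rpredM ?mpolyOverC // /mmap1 rpred_prod // => i _.
by rewrite rpredX // /splitr_var; case: (fintype.split i) => j;
  rewrite ?mpolyOverC mpolyOverX.
Qed.

Definition orbit_coef (f : {mpoly K[m + n]}) (j : nat) : {mpoly K[m + n]} :=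
  joinr_mpoly (symf (orbit_poly (splitr_mpoly f))`_j).

Lemma orbit_coef_over (S : subringClosed K) f j :
  f \is a mpolyOver (m + n) S -> orbit_coef f j \is a mpolyOver (m + n) S.
Proof.
move=> Sf; have /polyOverP/(_ j) := orbit_poly_over (splitr_mpoly_over Sf).
move=> /symf_over Sc; rewrite rpred_mhorner //.
by apply/forallP => i; rewrite mpolyOverX.
Qed.

Lemma orbit_coef_eval f j a x :
  (orbit_coef f j).@[joinv a (fun i : 'I_n => (mesym n K i.+1).@[x])] =
  (\prod_(s : 'S_n) ('X - (f.@[joinv a (fun i => x (s i))])%:P))`_j.
Proof.
rewrite /orbit_coef meval_joinr -meval2_comp_mesym -symfP ?orbit_poly_coef_sym //.
rewrite -coef_map map_orbit_poly.
by under eq_bigr do rewrite meval2_splitr.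
Qed.

End OrbitCoefficients.

Lemma ler_sum_mem (R : numDomainType) (I : eqType) (r : seq I) (F : I -> R) i :
  (forall j, 0 <= F j) -> i \in r -> F i <= \sum_(j <- r) F j.
Proof.
by move=> F0 ir; rewrite (perm_big _ (perm_to_rem ir)) big_cons lerDl sumr_ge0.
Qed.

Lemma ler_sum_const (R : numDomainType) (I : eqType) (r : seq I) (F : I -> R) c :
  (forall i, i \in r -> F i <= c) -> \sum_(i <- r) F i <= (size r)%:R * c.
Proof.
move=> Fc; rewrite big_seq (le_trans (ler_sum _ (fun i => Fc i))) //.
by rewrite -big_seq big_const_seq count_predT -Monoid.iteropE mulr_natl.
Qed.

Section ComplexModulus.
Variable R : realType.
Implicit Types (w v : R[i]).

Definition cmod w : R := complex.Re `|w|.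

Lemma cmodE w : `|w| = (cmod w)%:C%C.
Proof. by rewrite /cmod normc_def. Qed.

Lemma cmod_ge0 w : 0 <= cmod w.
Proof. by have := normr_ge0 w; rewrite cmodE lecR. Qed.

Lemma cmod0 : cmod 0 = 0.
Proof. by rewrite /cmod normr0. Qed.

Lemma cmod1 : cmod 1 = 1.
Proof. by rewrite /cmod normr1. Qed.

Lemma cmodN w : cmod (- w) = cmod w.
Proof. by rewrite /cmod normrN. Qed.

Lemma cmodM w v : cmod (w * v) = cmod w * cmod v.
Proof. by have := normrM w v; rewrite !cmodE -rmorphM => -[]. Qed.

Lemma cmodX w k : cmod (w ^+ k) = cmod w ^+ k.
Proof. by have := normrX k w; rewrite !cmodE -rmorphXn => -[]. Qed.

Lemma cmodB_le w v : cmod (w - v) <= cmod w + cmod v.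
Proof. by have := ler_normB w v; rewrite !cmodE -rmorphD lecR. Qed.

Lemma cmod_sum_le (I : Type) (r : seq I) (F : I -> R[i]) :
  cmod (\sum_(i <- r) F i) <= \sum_(i <- r) cmod (F i).
Proof.
by rewrite -lecR -cmodE rmorph_sum (le_trans (ler_norm_sum r F predT)).
Qed.

End ComplexModulus.

Section RootBounds.
Variable R : realType.

Lemma prod_XsubC_coef_le (rs : seq R[i]) rho : 0 <= rho ->
  {in rs, forall z, cmod z <= rho} ->
  forall j, cmod (\prod_(z <- rs) ('X - z%:P))`_j <=
    2 ^+ size rs * rho ^+ (size rs - j).
Proof.
move=> rho0; elim: rs => [|z rs IH] rs_le j.
  by rewrite big_nil coef1 expr0 mul1r; case: j => [|j]; rewrite ?cmod1 ?cmod0.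
have {}IH := IH (fun w w_rs => rs_le w (@mem_behead _ (z :: rs) w w_rs)).
rewrite big_cons mulrBl coefB coefXM coefCM /=.
set P := \prod_(w <- rs) _ in IH *; set k := size rs in IH *.
have zP : cmod (z * P`_j) <= 2 ^+ k * rho ^+ (k.+1 - j).
  rewrite cmodM; have [jk|kj] := leqP j k.
    rewrite subSn // exprS mulrCA.
    by apply: ler_pM; rewrite ?cmod_ge0 ?rs_le ?mem_head ?IH.
  by rewrite nth_default ?cmod0 ?mulr0 ?mulr_ge0 ?exprn_ge0 // size_prod_XsubC.
have XP : cmod (if j == 0 then 0 else P`_j.-1) <= 2 ^+ k * rho ^+ (k.+1 - j).
  by case: j {zP} => [|j] /=; rewrite ?cmod0 ?mulr_ge0 ?exprn_ge0 ?subSS ?IH.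
apply: le_trans (cmodB_le _ _) _; rewrite exprS -mulrA; lra.
Qed.

Lemma monic_root_le (P : {poly R[i]}) k z : (0 < k)%N -> size P = k.+1 ->
  P \is monic -> root P z ->
  exists2 j, (j < k)%N & cmod z ^+ (k - j) <= k%:R * cmod P`_j.
Proof.
move=> k_gt0 sizeP monP /rootP Pz.
have [/existsP [j le_j]|/existsPn lt_all] :=
  boolP [exists j : 'I_k, cmod z ^+ (k - j) <= k%:R * cmod P`_j]; first by exists j.
have {}lt_all j : (j < k)%N -> k%:R * cmod P`_j < cmod z ^+ (k - j).
  by move=> jk; have := lt_all (Ordinal jk); rewrite ltNge.
have z_gt0 : 0 < cmod z.
  rewrite lt_def cmod_ge0 andbT; apply/eqP => z0.
  have := lt_all 0%N k_gt0; rewrite z0 subn0 expr0n gtn_eqF //=.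
  by rewrite ltNge mulr_ge0 ?ler0n ?cmod_ge0.
have zk_le : cmod z ^+ k <= \sum_(i < k) cmod P`_i * cmod z ^+ i.
  have Pk : P`_k = 1 by move/monicP: monP; rewrite lead_coefE sizeP.
  move: Pz; rewrite horner_coef sizeP big_ord_recr /= Pk mul1r => /eqP.
  rewrite addr_eq0 => /eqP zkE; rewrite -cmodX -cmodN -zkE.
  apply: le_trans (cmod_sum_le _ _) _.
  by apply: ler_sum => i _; rewrite cmodM cmodX.
have lt_sum : k%:R * \sum_(i < k) cmod P`_i * cmod z ^+ i < cmod z ^+ k *+ k.
  have -> : cmod z ^+ k *+ k = \sum_(i < k) cmod z ^+ k by rewrite sumr_const card_ord.
  rewrite mulr_sumr; apply: ltr_sum.
    by apply/hasP; exists (Ordinal k_gt0); rewrite ?mem_index_enum.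
  move=> i _; have -> : cmod z ^+ k = cmod z ^+ (k - i) * cmod z ^+ i.
    by rewrite -exprD subnK // ltnW.
  by rewrite mulrA ltr_pM2r ?exprn_gt0 ?lt_all.
have := ler_wpM2l (ler0n _ k) zk_le; rewrite mulr_natl => ge_sum.
by move: lt_sum; rewrite ltNge ge_sum.
Qed.

End RootBounds.

(* P`_j has degree [K - j] in the roots, so every term scales like the roots to
   the power [2 L] when [K - j] divides [L]. *)
Definition coef_weight (R : realType) (L K : nat) (P : {poly R[i]}) : R :=
  \sum_(0 <= j < K) cmod (P`_j ^+ (L %/ (K - j))) ^+ 2.

Lemma coef_weight_ge0 (R : realType) L K (P : {poly R[i]}) : 0 <= coef_weight L K P.
Proof. by rewrite sumr_ge0 // => j _; rewrite exprn_ge0 ?cmod_ge0. Qed.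

Section CoefWeight.
Variables (R : realType) (L : nat) (rs : seq R[i]).
Let K := size rs.
Let P := \prod_(z <- rs) ('X - z%:P).
Hypothesis dvd_L : forall j, (j < K)%N -> (K - j %| L)%N.

Let coef_expK j : (j < K)%N -> (L %/ (K - j) * (K - j))%N = L.
Proof. by move=> jK; rewrite divnK ?dvd_L. Qed.

Let coef_exp_le j : (L %/ (K - j) <= L)%N.
Proof. exact: leq_div. Qed.

Lemma coef_weight_le rho : 0 <= rho -> {in rs, forall z, cmod z <= rho} ->
  coef_weight L K P <= K%:R * (4 ^+ (K * L) * rho ^+ (2 * L)).
Proof.
move=> rho0 rs_le; rewrite /coef_weight.
rewrite (le_trans (ler_sum_const (c := 4 ^+ (K * L) * rho ^+ (2 * L)) _))
  ?size_iota ?subn0 //.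
move=> j; rewrite mem_index_iota => /andP[_ jK]; set e := (L %/ (K - j))%N.
rewrite cmodX -exprM.
apply: le_trans (lerXn2r _ _ _ (prod_XsubC_coef_le rho0 rs_le j)) _;
  rewrite ?nnegrE ?cmod_ge0 ?mulr_ge0 ?exprn_ge0 // -/K.
rewrite exprMn -!exprM.
have -> : ((K - j) * (e * 2) = 2 * L)%N.
  by rewrite [(e * 2)%N]mulnC mulnCA [((K - j) * e)%N]mulnC coef_expK.
apply: ler_wpM2r; first by rewrite exprn_ge0.
rewrite [4]( _ : _ = 2 ^+ 2) -?exprM; last by rewrite -natrX.
apply: ler_weXn2l; rewrite ?ler1n //.
by rewrite [(2 * _)%N]mulnC mulnA leq_mul2r leq_mul2l coef_exp_le !orbT.
Qed.

Lemma root_le_coef_weight z : z \in rs ->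
  cmod z ^+ (2 * L) <= K%:R ^+ (2 * L) * coef_weight L K P.
Proof.
move=> z_rs; have K_gt0 : (0 < K)%N.
  by rewrite lt0n size_eq0; apply: contraTneq z_rs => ->.
have Pz : root P z by rewrite root_prod_XsubC.
have [j jK zj] := monic_root_le K_gt0 (size_prod_XsubC _ _) (monic_prod_XsubC _ _ _) Pz.
set e := (L %/ (K - j))%N.
have -> : (2 * L = (K - j) * (2 * e))%N.
  by rewrite mulnCA [((K - j) * e)%N]mulnC coef_expK.
rewrite exprM; apply: le_trans (lerXn2r _ _ _ zj) _;
  rewrite ?nnegrE ?exprn_ge0 ?mulr_ge0 ?cmod_ge0 // exprMn.
apply: ler_pM; rewrite ?exprn_ge0 ?cmod_ge0 //.
  apply: ler_weXn2l; first by rewrite ler1n.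
  by rewrite leq_pmull // subn_gt0.
have := @ler_sum_mem _ _ (index_iota 0 K)
  (fun i => cmod (P`_i ^+ (L %/ (K - i))) ^+ 2) j.
rewrite mem_index_iota jK cmodX -exprM mulnC; apply=> // i.
by rewrite exprn_ge0 ?cmod_ge0.
Qed.

End CoefWeight.

Definition sq_sum (R : realType) m n (fs : seq {mpoly R[i][m + n]}) (a : 'I_m -> R[i])
    (y : 'I_n -> R[i]) : R :=
  \sum_(f <- fs) cmod f.@[joinv a y] ^+ 2.

Lemma sq_sum_ge0 (R : realType) m n (fs : seq {mpoly R[i][m + n]}) a y :
  0 <= sq_sum fs a y.
Proof. by rewrite sumr_ge0 // => f _; rewrite exprn_ge0 ?cmod_ge0. Qed.

Definition orbit_weight (R : realType) m n (fs : seq {mpoly R[i][m + n]})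
    (a : 'I_m -> R[i]) (x : 'I_n -> R[i]) : R :=
  \sum_(f <- fs) coef_weight (n`!)`! n`!
    (\prod_(s : 'S_n) ('X - (f.@[joinv a (fun i => x (s i))])%:P)).

Definition weight_const (R : realType) (N n : nat) : R :=
  (N * n`!)%:R * 4 ^+ (n`! * (n`!)`!) + 1.

Definition sq_sum_const (R : realType) (N n : nat) : R := (N * n`! ^ 2)%:R + 1.

Section OrbitComparison.
Variables (R : realType) (m n : nat) (fs : seq {mpoly R[i][m + n]}).
Variables (a : 'I_m -> R[i]) (x : 'I_n -> R[i]).
Local Notation K := n`!.
Local Notation L := K`!.
Local Notation T := (sq_sum fs a x).
Local Notation G := (orbit_weight fs a x).

Let orbit_vals (f : {mpoly R[i][m + n]}) : seq R[i] :=
  [seq f.@[joinv a (fun i => x (s i))] | s : 'S_n <- index_enum {perm 'I_n}].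

Let size_orbit_vals f : size (orbit_vals f) = K.
Proof. by rewrite size_map [index_enum _]unlock -enumT -cardT card_Sn. Qed.

Let dvd_fact_K f j : (j < size (orbit_vals f))%N -> (size (orbit_vals f) - j %| L)%N.
Proof. by rewrite size_orbit_vals => jK; rewrite dvdn_fact // subn_gt0 jK leq_subr. Qed.

Let orbit_weightE :
  G = \sum_(f <- fs) coef_weight L K (\prod_(z <- orbit_vals f) ('X - z%:P)).
Proof. by apply: eq_bigr => f _; rewrite big_map. Qed.

Lemma orbit_weight_le : (forall s : 'S_n, sq_sum fs a (fun i => x (s i)) = T) ->
  G <= (size fs * K)%:R * 4 ^+ (K * L) * T ^+ L.
Proof.
move=> T_sym; rewrite orbit_weightE natrM -!mulrA; apply: ler_sum_const => f f_fs.
have vals_le : {in orbit_vals f, forall z, cmod z <= Num.sqrt T}.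
  move=> _ /mapP [s _ ->].
  rewrite -(ger0_norm (cmod_ge0 _)) -sqrtr_sqr ler_sqrt ?sq_sum_ge0 //.
  rewrite -(T_sym s); apply: (ler_sum_mem (F := fun g => cmod g.@[_] ^+ 2)) => // g.
  by rewrite exprn_ge0 ?cmod_ge0.
have := coef_weight_le (@dvd_fact_K f) (sqrtr_ge0 T) vals_le.
by rewrite size_orbit_vals [_ ^+ (2 * L)]exprM sqr_sqrtr ?sq_sum_ge0.
Qed.

Lemma sq_le_orbit_weight f : f \in fs ->
  (cmod f.@[joinv a x] ^+ 2) ^+ L <= (K%:R ^+ 2) ^+ L * G.
Proof.
move=> f_fs; have x_orbit : f.@[joinv a x] \in orbit_vals f.
  apply/mapP; exists 1%g; rewrite ?mem_index_enum //.
  by congr (f.@[joinv a _]); apply/funext => i; rewrite perm1.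
have := root_le_coef_weight (@dvd_fact_K f) x_orbit.
rewrite size_orbit_vals -!exprM mulnC => /le_trans; apply.
apply: ler_wpM2l; first by rewrite exprn_ge0 ?ler0n.
rewrite orbit_weightE.
apply: (ler_sum_mem (F := fun g => coef_weight L K (\prod_(z <- orbit_vals g) ('X - z%:P))))
  => // g; exact: coef_weight_ge0.
Qed.

Lemma orbit_weight_comparison :
  (forall s : 'S_n, sq_sum fs a (fun i => x (s i)) = T) ->
  G `^ L%:R^-1 <= weight_const R (size fs) n * T /\
  T <= sq_sum_const R (size fs) n * G `^ L%:R^-1.
Proof.
move=> T_sym; set w := G `^ _; have L_gt0 : (0 < L)%N := fact_gt0 _.
have T_ge0 : 0 <= T := sq_sum_ge0 _ _ _.
have G_ge0 : 0 <= G by rewrite sumr_ge0 // => f _; exact: coef_weight_ge0.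
have wL : w ^+ L = G.
  by rewrite -powR_mulrn ?powR_ge0 // -powRrM mulVf ?powRr1 // pnatr_eq0 -lt0n.
have c_ge1 : 1 <= weight_const R (size fs) n by rewrite lerDr mulr_ge0 ?exprn_ge0.
split.
  rewrite -(ler_pXn2r L_gt0) ?nnegrE ?mulr_ge0 ?powR_ge0 ?(le_trans ler01 c_ge1) //.
  rewrite wL exprMn; apply: le_trans (orbit_weight_le T_sym) _.
  apply: ler_wpM2r; first by rewrite exprn_ge0.
  by apply: le_trans (ler_eXnr L_gt0 c_ge1); rewrite lerDl.
have sq_le f : f \in fs -> cmod f.@[joinv a x] ^+ 2 <= K%:R ^+ 2 * w.
  move=> f_fs; rewrite -(ler_pXn2r L_gt0) ?nnegrE ?exprn_ge0 ?mulr_ge0 ?cmod_ge0 ?powR_ge0 //.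
  by rewrite [X in _ <= X]exprMn wL sq_le_orbit_weight.
apply: le_trans (ler_sum_const sq_le) _; rewrite mulrA -natrX -natrM.
by apply: ler_wpM2r; rewrite ?powR_ge0 ?lerDl.
Qed.

End OrbitComparison.

Definition orbit_family (R : realType) m n (fs : seq {mpoly R[i][m + n]}) :
    seq {mpoly R[i][m + n]} :=
  [seq orbit_coef f j ^+ ((n`!)`! %/ (n`! - j)) | f <- fs, j <- index_iota 0 n`!].

Lemma orbit_family_over (R : realType) m n (S : subringClosed R[i])
    (fs : seq {mpoly R[i][m + n]}) :
  {in fs, forall f, f \is a mpolyOver (m + n) S} ->
  {in orbit_family fs, forall g, g \is a mpolyOver (m + n) S}.
Proof.
move=> fs_S _ /allpairsP [[f j] [/= f_fs _ ->]].
by rewrite rpredX // orbit_coef_over // fs_S.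
Qed.

Lemma abspp_orbit_family (R : realType) m n (fs : seq {mpoly R[i][m + n]}) (eps : rat)
    (a : 'I_m -> R[i]) (x : 'I_n -> R[i]) :
  abspp (orbit_family fs) (eps / ((n`!)`!)%:R) (joinv a (esymv x)) =
  (orbit_weight fs a x `^ ((n`!)`!)%:R^-1) `^ (ratr eps / 2).
Proof.
rewrite /abspp -powRrM; congr (_ `^ _); last first.
  by rewrite fmorph_div rmorph_nat mulrAC mulrC.
have meval_exp (p : {mpoly R[i][m + n]}) k v : (p ^+ k).@[v] = p.@[v] ^+ k.
  exact: rmorphXn.
rewrite big_allpairs_dep; apply: eq_bigr => f _; apply: eq_bigr => j _.
by rewrite meval_exp orbit_coef_eval.
Qed.

Theorem lemma4p3 (R : realType) (n D N : nat) (eps : rat) :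
  (0 < D)%N -> 0 <= eps ->
  exists c1 c2 : R, 0 < c1 /\ 0 < c2 /\
  forall (m : nat) (C : {pred R[i]}), subring_closed C ->
  forall fs : seq {mpoly R[i][m + n]},
    size fs = N ->
    (forall f : {mpoly R[i][m + n]}, f \in fs ->
       f \is a mpolyOver (m + n) C /\ (msize f <= D.+1)%N) ->
    (forall (s : {perm 'I_n}) (a : 'I_m -> R[i]) (x : 'I_n -> R[i]),
       abspp fs eps (joinv a (fun j => x (s j))) = abspp fs eps (joinv a x)) ->
    exists (gs : seq {mpoly R[i][m + n]}) (e' : rat),
      0 <= e' /\ (forall g : {mpoly R[i][m + n]}, g \in gs -> g \is a mpolyOver (m + n) C) /\
      forall (a : 'I_m -> R[i]) (x : 'I_n -> R[i]),
        abspp fs eps (joinv a x) <= c2 * abspp gs e' (joinv a (esymv x)) /\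
        abspp gs e' (joinv a (esymv x)) <= c1 * abspp fs eps (joinv a x).
Proof.
move=> _ eps_ge0; set b : R := ratr eps / 2.
have b_ge0 : 0 <= b by rewrite divr_ge0 ?ler0q.
have const_gt0 (c : R) : 1 <= c -> 0 < c `^ b.
  by move=> c_ge1; apply/powR_gt0/(lt_le_trans ltr01 c_ge1).
exists (weight_const R N n `^ b), (sq_sum_const R N n `^ b).
split; first by apply: const_gt0; rewrite lerDr mulr_ge0 ?exprn_ge0.
split; first by apply: const_gt0; rewrite lerDr.
move=> m C C_subring fs <- fs_over fs_sym.
exists (orbit_family fs), (eps / ((n`!)`!)%:R); split; first by rewrite divr_ge0.
split.
  apply: (orbit_family_over (S := subring_closed_pred C_subring)) => f f_fs.
  by case: (fs_over f f_fs).
have abspp_fs a y : abspp fs eps (joinv a y) = sq_sum fs a y `^ b by [].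
move=> a x; rewrite abspp_orbit_family !abspp_fs -/b.
have [->|b_neq0] := eqVneq b 0; first by rewrite !powRr0 mulr1 lexx.
have b_gt0 : 0 < b by rewrite lt_def b_neq0.
have T_sym (s : 'S_n) : sq_sum fs a (fun i => x (s i)) = sq_sum fs a x.
  have := fs_sym s a x; rewrite !abspp_fs.
  by apply: (powR_injective b_gt0); rewrite nnegrE sq_sum_ge0.
have [G_le T_le] := orbit_weight_comparison T_sym.
have c0_ge0 : 0 <= weight_const R (size fs) n by rewrite addr_ge0 ?mulr_ge0 ?exprn_ge0.
have c1_ge0 : 0 <= sq_sum_const R (size fs) n by rewrite addr_ge0.
split; rewrite -powRM ?powR_ge0 ?sq_sum_ge0 //; apply: ge0_ler_powR => //;
  by rewrite nnegrE ?mulr_ge0 ?powR_ge0 ?sq_sum_ge0.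
Qed.
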